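(* Let $\alpha$ be a complex parameter and let $B_n^{(\alpha)}(x)$ be the generalized Bernoulli polynomials, defined by $e^{xt}\left(\frac{t}{e^t-1}\right)^{\alpha}=\sum_{n\ge0}B_n^{(\alpha)}(x)\frac{t^n}{n!}$. For $n\ge0$ put $$T_n(\alpha)=\sum_{k=0}^{n}(-1)^k\binom{k+\alpha-1}{k}\sum_{j=0}^{k}\frac{j!\,(-1)^{k+j}}{(n+j)!}\binom{k}{j}\left\{{n+j\atop j}\right\}.$$ Then $\left(\frac{t}{e^t-1}\right)^{\alpha}=\sum_{n\ge0}T_n(\alpha)t^n$, and for every $n\ge0$, $$B_n^{(\alpha)}(x)=n!\sum_{i=0}^{n}T_i(\alpha)\frac{x^{n-i}}{(n-i)!}.$$
   Context: $\left\{{m\atop j}\right\}$ denotes the Stirling number of the second kind, with $\left\{{0\atop 0}\right\}=1$ and $\left\{{m\atop 0}\right\}=0$ for $m>0$. For complex $y$ and integer $k\ge0$, $\binom{y}{k}=\frac{y(y-1)\cdots(y-k+1)}{k!}$. The power $\left(\frac{t}{e^t-1}\right)^{\alpha}$ is the formal series $(1+h)^{-\alpha}=\sum_{k\ge0}(-1)^k\binom{k+\alpha-1}{k}h^k$ with $h=\frac{e^t-1}{t}-1$. *)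

From HB Require Import structures.
From mathcomp Require Import all_boot all_order all_algebra.
Set Implicit Arguments. Unset Strict Implicit. Unset Printing Implicit Defensive.
Import Order.TTheory GRing.Theory Num.Theory.
Local Open Scope ring_scope.

(* Formal power series over a ring R, represented by their coefficient
   sequences: s n = coefficient of t^n. *)
Definition fps (R : nzRingType) := nat -> R.

Definition fps_mul (R : nzRingType) (a b : fps R) : fps R :=
  fun n => \sum_(i < n.+1) a i * b (n - i)%N.

Definition fps_one (R : nzRingType) : fps R := fun n => if n == 0%N then 1 else 0.

Definition fps_pow (R : nzRingType) (a : fps R) (k : nat) : fps R :=
  iter k (fps_mul a) (@fps_one R).

Definition gbinom (F : fieldType) (y : F) (k : nat) : F :=
  (\prod_(i < k) (y - i%:R)) / (k`!)%:R.

Fixpoint stirling2 (m j : nat) : nat :=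
  match m, j with
  | 0, 0 => 1
  | 0, _.+1 => 0
  | _.+1, 0 => 0
  | m'.+1, j'.+1 => (j'.+1 * stirling2 m' j'.+1 + stirling2 m' j')%N
  end.

(* h = (e^t - 1)/t - 1 = \sum_{m >= 1} t^m/(m+1)! *)
Definition hser (F : fieldType) : fps F :=
  fun m => if m == 0%N then 0 else ((m.+1)`!%:R)^-1.

(* (t/(e^t-1))^alpha := (1+h)^{-alpha} = \sum_k (-1)^k binom(k+alpha-1,k) h^k.
   Since h has zero constant term, h^k has no terms of degree < k, so the
   coefficient of t^n only receives contributions from k <= n. *)
Definition tdiv_pow (F : fieldType) (alpha : F) : fps F :=
  fun n => \sum_(k < n.+1)
             (-1) ^+ k * gbinom (k%:R + alpha - 1) k * fps_pow (@hser F) k n.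

Definition exp_ser (F : fieldType) (x : F) : fps F :=
  fun n => x ^+ n / (n`!)%:R.

Definition genBernoulli (F : fieldType) (alpha x : F) (n : nat) : F :=
  (n`!)%:R * fps_mul (exp_ser x) (tdiv_pow alpha) n.

Definition Tcoef (F : fieldType) (alpha : F) (n : nat) : F :=
  \sum_(k < n.+1) (-1) ^+ k * gbinom (k%:R + alpha - 1) k *
    \sum_(j < k.+1) (j`!)%:R * (-1) ^+ (k + j) / ((n + j)`!)%:R
                    * ('C(k, j))%:R * (stirling2 (n + j) j)%:R.

From HB Require Import structures.
From mathcomp Require Import all_boot all_order all_algebra.
From mathcomp Require Import ring zify.
Set Implicit Arguments. Unset Strict Implicit. Unset Printing Implicit Defensive.
Import Order.TTheory GRing.Theory Num.Theory.
Local Open Scope ring_scope.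

(* Let g = (e^t - 1)/t = \sum_m t^m/(m+1)!, so that h = g - 1 and
   (t/(e^t-1))^alpha = \sum_k (-1)^k binom(k+alpha-1,k) h^k.  The proof computes
   the coefficient of t^n in h^k in closed form:
   1. Stirling numbers satisfy the binomial recurrence
      {M+1 \atop j+1} = \sum_m C(M,m) {m \atop j}; we also need a reversed and
      truncated form of it.
   2. By induction on j, using 1 for the Cauchy product g * g^j, the
      coefficient of t^n in g^j is j! {n+j \atop j}/(n+j)!.
   3. Expanding h^k = (g-1)^k by the binomial theorem (applied to polynomial
      truncations, where the library provides it) and using 2 gives the inner
      sum of T_n(alpha) as the coefficient of t^n in h^k.
   Hence the coefficients of (t/(e^t-1))^alpha are the T_n(alpha), and the
   formula for B_n^(alpha)(x) follows from commutativity of the Cauchy product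
   with e^{xt}. *)

Lemma stirling2_small m j : (m < j)%N -> stirling2 m j = 0%N.
Proof. by elim: m j => [|m IH] [|j] //= lt_mj; rewrite !IH ?muln0 // ltnW. Qed.

Lemma stirling2S0 m : stirling2 m.+1 0 = 0%N.
Proof. by []. Qed.

Lemma stirling2SS m j :
  stirling2 m.+1 j.+1 = (j.+1 * stirling2 m j.+1 + stirling2 m j)%N.
Proof. by []. Qed.

Arguments stirling2 : simpl never.

(* Binomial recurrence: {M+1 \atop j+1} = \sum_m C(M,m) {m \atop j}
   (classify the partitions by the block containing the last element). *)
Lemma stirling2_binom_sum M j :
  (\sum_(m < M.+1) 'C(M, m) * stirling2 m j)%N = stirling2 M.+1 j.+1.
Proof.
elim: M j => [|M IH] j.
  by rewrite big_ord1 bin0 mul1n stirling2SS (@stirling2_small 0) ?muln0.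
have shifted : (\sum_(i < M.+1) 'C(M, i) * stirling2 i.+1 j)%N =
               (j * stirling2 M.+1 j.+1 + stirling2 M.+1 j)%N.
  case: j => [|j].
    by rewrite stirling2S0 big1 // => i _; rewrite stirling2S0 muln0.
  under eq_bigr do rewrite stirling2SS mulnDr mulnCA.
  by rewrite big_split -big_distrr /= !IH.
(* Pascal's rule C(M+1,i+1) = C(M,i+1) + C(M,i) splits the sum in two. *)
rewrite big_ord_recl.
under eq_bigr do rewrite lift0 binS mulnDl.
rewrite big_split addnA shifted /=.
have -> : ('C(M.+1, 0) * stirling2 0 j +
           \sum_(i < M.+1) 'C(M, i.+1) * stirling2 i.+1 j)%N = stirling2 M.+1 j.+1.
  transitivity (\sum_(m < M.+2) 'C(M, m) * stirling2 m j)%N.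
    by rewrite [in RHS]big_ord_recl !bin0.
  by rewrite big_ord_recr /= bin_small ?ltnSn // mul0n addn0 IH.
by rewrite [RHS]stirling2SS; lia.
Qed.

(* The binomial recurrence for M = N+1 with the summation index reversed and
   the m = N+1 term moved to the other side:
   \sum_i C(N+1,i+1) {N-i \atop j} = (j+1) {N+1 \atop j+1}. *)
Lemma stirling2_binom_sum_rev N j :
  (\sum_(i < N.+1) 'C(N.+1, i.+1) * stirling2 (N - i) j)%N =
  (j.+1 * stirling2 N.+1 j.+1)%N.
Proof.
apply: (@addIn (stirling2 N.+1 j)); rewrite -stirling2SS -stirling2_binom_sum.
rewrite [RHS]big_ord_recr /= binn mul1n; congr (_ + _)%N.
rewrite (reindex_inj rev_ord_inj); apply: eq_bigr => i _ /=.
have le_iN : (i <= N)%N by rewrite -ltnS.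
by rewrite subSS -subSn // bin_sub ?subKn // ltnW.
Qed.

(* The same sum for N = n+j only needs i <= n: the remaining terms have
   fewer than j elements. This is the form arising in a Cauchy product. *)
Lemma stirling2_binom_sum_trunc n j :
  (\sum_(i < n.+1) 'C((n + j).+1, i.+1) * stirling2 (n + j - i) j)%N =
  (j.+1 * stirling2 (n + j).+1 j.+1)%N.
Proof.
pose term i := ('C((n + j).+1, i.+1) * stirling2 (n + j - i) j)%N.
have le_n_nj : (n.+1 <= (n + j).+1)%N by rewrite ltnS leq_addr.
rewrite -stirling2_binom_sum_rev (big_ord_widen _ term le_n_nj) big_mkcond.
apply: eq_bigr => i _; case: ltnP => // le_n_i.
by rewrite stirling2_small ?muln0 //; have := ltn_ord i; lia.
Qed.

(* g = (e^t - 1)/t = \sum_m t^m/(m+1)!, so that h = g - 1. *)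
Definition gser (F : fieldType) : fps F := fun m => ((m.+1)`!%:R)^-1.

Lemma natr_fact_neq0 (R : numDomainType) m : ((m`!)%:R : R) != 0.
Proof. by rewrite pnatr_eq0 -lt0n fact_gt0. Qed.

(* The coefficient of t^n in g^j is j! {n+j \atop j} / (n+j)!, i.e.
   (e^t - 1)^j = j! \sum_m {m \atop j} t^m/m!. By induction on j: the
   coefficient of g^(j+1) = g * g^j is the truncated binomial recurrence. *)
Lemma coef_gser_pow (F : numFieldType) j n :
  fps_pow (@gser F) j n = (j`!)%:R * (stirling2 (n + j) j)%:R / ((n + j)`!)%:R.
Proof.
elim: j n => [|j IH] n.
  rewrite /fps_pow /= /fps_one addn0; case: n => [|n].
    by rewrite eqxx fact0 mul1r divr1.
  by rewrite stirling2S0 mulr0 mul0r.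
rewrite /fps_pow iterS -/(fps_pow _ j) /fps_mul.
(* Each convolution term, rewritten with C(n+j+1,i+1) = (n+j+1)!/((i+1)!(n+j-i)!). *)
have term i : (i < n.+1)%N ->
    gser F i * fps_pow (@gser F) j (n - i)%N =
    (j`!)%:R / (((n + j).+1)`!)%:R *
      (('C((n + j).+1, i.+1) * stirling2 (n + j - i) j)%N)%:R.
  move=> lt_in; rewrite IH (_ : (n - i + j = n + j - i)%N); last by lia.
  have le_ij : (i.+1 <= (n + j).+1)%N by rewrite ltnS (leq_trans _ (leq_addr _ _)).
  rewrite /gser -(bin_fact le_ij) subSS.
  move: (natr_fact_neq0 F i.+1) (natr_fact_neq0 F (n + j - i)).
  have : ('C((n + j).+1, i.+1)%:R : F) != 0 by rewrite pnatr_eq0 -lt0n bin_gt0.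
  set c := 'C(_, _); set a := (i.+1)`!; set d := (n + j - i)`!.
  by clearbody c a d; rewrite !natrM => *; field; apply/and3P.
rewrite (eq_bigr _ (fun (i : 'I_n.+1) _ => term i (ltn_ord i))) -mulr_sumr -natr_sum.
rewrite stirling2_binom_sum_trunc addnS (factS j) !natrM; ring.
Qed.

Definition fps_trunc (R : nzRingType) (N : nat) (a : fps R) : {poly R} :=
  \poly_(i < N) a i.

(* Coefficients of order < N of a power of a series are those of the same
   power of its truncation at order N; this transfers the polynomial
   ring identities of the library (binomial theorem) to power series. *)
Lemma coef_fps_pow_trunc (R : nzRingType) N (a : fps R) k n : (n < N)%N ->
  fps_pow a k n = ((fps_trunc N a) ^+ k)`_n.
Proof.
elim: k n => [|k IH] n lt_nN.
  by rewrite expr0 coef1 /fps_pow /= /fps_one; case: (n == 0%N).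
rewrite exprS coefM /fps_pow iterS -/(fps_pow a k) /fps_mul.
apply: eq_bigr => i _; have le_in : (i <= n)%N by rewrite -ltnS.
rewrite coef_poly (leq_ltn_trans le_in lt_nN) IH //.
exact: leq_ltn_trans (leq_subr i n) lt_nN.
Qed.

Lemma fps_trunc_hser (F : fieldType) N : (0 < N)%N ->
  fps_trunc N (@hser F) = fps_trunc N (@gser F) - 1.
Proof.
move=> N_gt0; apply/polyP => i; rewrite coefB coef1 !coef_poly /hser /gser.
by case: i => [|i] /=; rewrite ?N_gt0 ?invr1 ?subrr // subr0; case: ifP.
Qed.

Lemma coef_hser_pow_binom (F : fieldType) k n : fps_pow (@hser F) k n =
  \sum_(j < k.+1) (-1) ^+ (k + j) * ('C(k, j))%:R * fps_pow (@gser F) j n.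
Proof.
rewrite (@coef_fps_pow_trunc _ n.+1) // fps_trunc_hser // -opprB exprNn exprBn.
rewrite mulr_sumr coef_sum; apply: eq_bigr => j _.
rewrite expr1n mulr1 -mulrnAr mulrA -exprD -(rmorph_sign (@polyC F)) coefCM coefMn.
by rewrite -(@coef_fps_pow_trunc _ n.+1) // -mulrA mulr_natl.
Qed.

Lemma coef_hser_pow (F : numFieldType) k n : fps_pow (@hser F) k n =
  \sum_(j < k.+1) (j`!)%:R * (-1) ^+ (k + j) / ((n + j)`!)%:R
                  * ('C(k, j))%:R * (stirling2 (n + j) j)%:R.
Proof.
rewrite coef_hser_pow_binom; apply: eq_bigr => j _.
by rewrite coef_gser_pow; ring.
Qed.

Lemma fps_mulC (R : comNzRingType) (a b : fps R) n :
  fps_mul a b n = fps_mul b a n.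
Proof.
rewrite /fps_mul (reindex_inj rev_ord_inj); apply: eq_bigr => i _ /=.
by rewrite subKn 1?mulrC // -ltnS.
Qed.

Lemma tdiv_pow_Tcoef (F : numFieldType) (alpha : F) n :
  tdiv_pow alpha n = Tcoef alpha n.
Proof. by apply: eq_bigr => k _; rewrite coef_hser_pow. Qed.

Lemma genBernoulli_Tcoef (F : numFieldType) (alpha x : F) n :
  genBernoulli alpha x n =
    (n`!)%:R * \sum_(i < n.+1) Tcoef alpha i * x ^+ (n - i) / ((n - i)`!)%:R.
Proof.
rewrite /genBernoulli fps_mulC /fps_mul; congr (_ * _); apply: eq_bigr => i _.
by rewrite tdiv_pow_Tcoef mulrA.
Qed.

Theorem mainTheorem10 (C : numClosedFieldType) (alpha : C) :
  (forall n : nat, tdiv_pow alpha n = Tcoef alpha n) /\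
  (forall (n : nat) (x : C),
     genBernoulli alpha x n =
       (n`!)%:R * \sum_(i < n.+1) Tcoef alpha i * x ^+ (n - i) / ((n - i)`!)%:R).
Proof.
split=> [n | n x]; [exact: tdiv_pow_Tcoef | exact: genBernoulli_Tcoef].
Qed.
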